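(* Let $N=(V,E,\tau,\{u_{ij}\})$ be a temporal network with uniform static edge length $\tau$ and piecewise constant capacities, $T$ a time horizon, and $\phi$ a cut function of a minimum $(s,0)$-$(d,T)$ cut of $\textsc{TEN}(N,T)$. Let $X_\phi=\{i\in V:\phi(i)\in\{0,T+1\}\}$ and let $C\subseteq V\setminus X_\phi$ satisfy $\phi(i)\notin F(\phi,C,i)$ for all $i\in C$. Then $\mathrm{cost}(\phi_C^+)=\mathrm{cost}(\phi_C^-)=\mathrm{cost}(\phi)$.
   Context: $\textsc{TEN}(N,T)$ is the steady-state network on $V\times[0,T]$ with an edge $(i,t)\to(j,t+\tau)$ of capacity $u_{ij}(t)$ whenever $ij\in E$ and $u_{ij}(t)\ne0$, and an infinite-capacity edge $(i,t)\to(i,t+1)$ for $t\in[0,T-1]$; source $(s,0)$, sink $(d,T)$. A cut function is $\phi:V\to[0,T+1]$ with $\phi(s)=0$, $\phi(d)=T+1$, representing the cut with source side $\{(i,t):t\ge\phi(i)\}$; $\mathrm{cost}(\phi)$ is the total capacity of edges from source side to sink side. $\mathcal T=\{t:\exists ij\in E,\ u_{ij}(t)\ne u_{ij}(t-1)\}\cup\{0,T,T+1\}$. For $C\subseteq V\setminus X_\phi$: $\phi_C^+(i)=\phi(i)+1$ for $i\in C$ and $\phi_C^+(i)=\phi(i)$ otherwise; $\phi_C^-(i)=\phi(i)-1$ for $i\in C$ and $\phi_C^-(i)=\phi(i)$ otherwise. For $i\in C$, the forbidden set $F(\phi,C,i)$ is the union of $\mathcal T\cup\{\theta+\tau:\theta\in\mathcal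 T\}$, $\{\phi(j)-\tau,\phi(j):ij\in E,\ j\in V\setminus C\}$, and $\{\phi(j)+\tau,\phi(j):ji\in E,\ j\in V\setminus C\}$. *)

From mathcomp Require Import all_boot all_order all_algebra.
Set Implicit Arguments. Unset Strict Implicit. Unset Printing Implicit Defensive.
Import Order.TTheory GRing.Theory Num.Theory.
Local Open Scope ring_scope.

(* Temporal network N = (V, E, tau, u): V finite vertex type, E : rel V the
   (directed) edge relation, tau the uniform static edge length, and
   u i j t the capacity of edge ij at (integer) time t. *)

(* A "vertex set" of TEN(N,T) is described by its indicator S : V -> nat -> bool
   (only the times t in [0,T] are relevant). *)

(* Total capacity of the finite-capacity edges (i,t) -> (j,t+tau) of TEN(N,T)
   going from S to its complement.  Edges with u i j t = 0 contribute 0. *)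
Definition ten_cost (R : realDomainType) (V : finType) (E : rel V) (tau T : nat)
  (u : V -> V -> nat -> R) (S : V -> nat -> bool) : R :=
  \sum_(i : V) \sum_(j : V | E i j)
     \sum_(t < T.+1 | [&& (t + tau <= T)%N, S i t & ~~ S j (t + tau)%N]) u i j t.

(* No infinite-capacity holdover edge (i,t) -> (i,t+1), t in [0,T-1],
   leaves S, i.e. the cut S has finite capacity. *)
Definition holdover_closed (V : finType) (T : nat) (S : V -> nat -> bool) : Prop :=
  forall (i : V) (t : nat), (t < T)%N -> S i t -> S i t.+1.

Definition is_cut_fun (V : finType) (s d : V) (T : nat) (phi : V -> nat) : Prop :=
  [/\ phi s = 0%N, phi d = T.+1 & forall i, (phi i <= T.+1)%N].

(* Source side of the cut represented by phi: {(i,t) : t >= phi i}. *)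
Definition cut_set (V : finType) (phi : V -> nat) : V -> nat -> bool :=
  fun i t => (phi i <= t)%N.

Definition cost (R : realDomainType) (V : finType) (E : rel V) (tau T : nat)
  (u : V -> V -> nat -> R) (phi : V -> nat) : R :=
  ten_cost E tau T u (cut_set phi).

(* phi is the cut function of a minimum (s,0)-(d,T) cut of TEN(N,T):
   its cost is at most the capacity of every (s,0)-(d,T) cut; cuts crossed
   by a holdover edge have infinite capacity, so only finite ones matter. *)
Definition is_min_cut_fun (R : realDomainType) (V : finType) (E : rel V)
  (tau T : nat) (u : V -> V -> nat -> R) (s d : V) (phi : V -> nat) : Prop :=
  is_cut_fun s d T phi /\
  forall S : V -> nat -> bool, S s 0%N -> ~~ S d T -> holdover_closed T S ->
    cost E tau T u phi <= ten_cost E tau T u S.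

Definition in_X (V : finType) (T : nat) (phi : V -> nat) (i : V) : bool :=
  (phi i == 0%N) || (phi i == T.+1).

Definition in_breaks (R : realDomainType) (V : finType) (E : rel V) (T : nat)
  (u : V -> V -> nat -> R) (t : nat) : Prop :=
  (exists i j, E i j /\ (0 < t)%N /\ u i j t != u i j t.-1)
  \/ t = 0%N \/ t = T \/ t = T.+1.

(* The forbidden set F(phi, C, i); "x = phi j - tau" is written
   "x + tau = phi j" (times are natural numbers). *)
Definition in_forbidden (R : realDomainType) (V : finType) (E : rel V)
  (tau T : nat) (u : V -> V -> nat -> R) (phi : V -> nat) (C : {set V})
  (i : V) (x : nat) : Prop :=
  (exists theta, in_breaks E T u theta /\ (x = theta \/ x = (theta + tau)%N))
  \/ (exists j, E i j /\ j \notin C /\ ((x + tau)%N = phi j \/ x = phi j))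
  \/ (exists j, E j i /\ j \notin C /\ (x = (phi j + tau)%N \/ x = phi j)).

Definition phi_plus (V : finType) (phi : V -> nat) (C : {set V}) : V -> nat :=
  fun i => if i \in C then (phi i).+1 else phi i.

Definition phi_minus (V : finType) (phi : V -> nat) (C : {set V}) : V -> nat :=
  fun i => if i \in C then (phi i).-1 else phi i.

(* By min-cut optimality, cost(phi) <= cost(phi_C^+) and cost(phi) <= cost(phi_C^-),
   since both shifts are again cut functions (C avoids s and d).  So it suffices to
   show cost(phi_C^+) + cost(phi_C^-) = 2 cost(phi).  The capacity cut on an edge ij
   is the sum of u_ij over the window [phi i, phi j - tau), a difference of prefix
   sums.  Shifting an endpoint of the window by +1 and by -1 averages out exactly
   when the capacity is constant across that endpoint, and the window stays
   nonempty (resp. empty) when the endpoints are not tight (phi i + tau <> phi j):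
   both are what phi(i) outside F(phi,C,i) guarantees. *)
From mathcomp Require Import all_boot all_order all_algebra.
From mathcomp Require Import zify lra.
Import Order.TTheory GRing.Theory Num.Theory.
Set Implicit Arguments. Unset Strict Implicit.
Local Open Scope ring_scope.

Section EdgeCapacity.
Context {R : realDomainType}.
Implicit Types (u : nat -> R) (tau T a b c x : nat).

Definition psum u x : R := \sum_(t < x) u t.

(* Edge (i,t) -> (j,t+tau) is cut by phi iff phi i <= t and t + tau < phi j;
   here a = phi i and c = phi j. *)
Definition edge_cut_cap u tau a c : R := psum u (maxn a (c - tau)) - psum u a.

Lemma psumS u x : psum u x.+1 = psum u x + u x.
Proof. by rewrite /psum big_ord_recr. Qed.

Lemma psum_midpoint u x : (0 < x)%N -> u x = u x.-1 ->
  psum u x.+1 + psum u x.-1 = psum u x + psum u x.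
Proof. by case: x => [//|x] _ /= ux; rewrite !psumS ux; lra. Qed.

Lemma sum_window u T a b : (a <= b)%N -> (b <= T.+1)%N ->
  \sum_(t < T.+1 | (a <= t)%N && (t < b)%N) u t = psum u b - psum u a.
Proof.
move=> hab hb; have ha : (a <= T.+1)%N by apply: leq_trans hab hb.
rewrite /psum (big_ord_widen _ _ hb) (big_ord_widen _ _ ha).
apply/esym/eqP; rewrite subr_eq addrC; apply/eqP.
rewrite (bigID (fun t : 'I_T.+1 => (t < a)%N)) /=.
by congr (_ + _); apply: eq_bigl => t; apply/idP/idP; lia.
Qed.

Lemma edge_cut_capE u tau T a c : (a <= T.+1)%N -> (c <= T.+1)%N ->
  \sum_(t < T.+1 | [&& (t + tau <= T)%N, (a <= t)%N & ~~ (c <= t + tau)%N]) u t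
  = edge_cut_cap u tau a c.
Proof.
move=> ha hc; rewrite /edge_cut_cap -(@sum_window u T); try lia.
by apply: eq_bigl => t; apply/and3P/andP => [[]|[]]; split; lia.
Qed.

Lemma edge_cut_cap_open u tau a c : (a + tau <= c)%N ->
  edge_cut_cap u tau a c = psum u (c - tau) - psum u a.
Proof. by move=> h; rewrite /edge_cut_cap (maxn_idPr _) //; lia. Qed.

Lemma edge_cut_cap_closed u tau a c : (c <= a + tau)%N -> edge_cut_cap u tau a c = 0.
Proof. by move=> h; rewrite /edge_cut_cap (maxn_idPl _) ?subrr //; lia. Qed.

Lemma edge_cut_cap_midpoint_src u tau a c :
  (0 < a)%N -> (a + tau != c)%N -> u a = u a.-1 ->
  edge_cut_cap u tau a.+1 c + edge_cut_cap u tau a.-1 c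
  = edge_cut_cap u tau a c + edge_cut_cap u tau a c.
Proof.
move=> a_gt0 /eqP not_tight ua.
case: (ltnP (a + tau) c) => hc.
  rewrite !edge_cut_cap_open; try lia.
  by have := psum_midpoint a_gt0 ua; lra.
by rewrite !edge_cut_cap_closed ?addr0 //; lia.
Qed.

Lemma edge_cut_cap_midpoint_dst u tau a c :
  (0 < c)%N -> (a + tau != c)%N -> ((tau < c)%N -> u (c - tau)%N = u (c - tau).-1) ->
  edge_cut_cap u tau a c.+1 + edge_cut_cap u tau a c.-1
  = edge_cut_cap u tau a c + edge_cut_cap u tau a c.
Proof.
move=> c_gt0 /eqP not_tight uc.
case: (ltnP (a + tau) c) => hc.
  rewrite !edge_cut_cap_open; try lia.
  have -> : (c.+1 - tau = (c - tau).+1)%N by lia.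
  have -> : (c.-1 - tau = (c - tau).-1)%N by lia.
  have tau_lt : (tau < c)%N by lia.
  have c_tau_gt0 : (0 < c - tau)%N by lia.
  by have := psum_midpoint c_tau_gt0 (uc tau_lt); lra.
by rewrite !edge_cut_cap_closed ?addr0 //; lia.
Qed.

Lemma edge_cut_cap_midpoint_both u tau a c :
  (0 < a)%N -> (0 < c)%N -> u a = u a.-1 ->
  ((tau < c)%N -> u (c - tau)%N = u (c - tau).-1) ->
  edge_cut_cap u tau a.+1 c.+1 + edge_cut_cap u tau a.-1 c.-1
  = edge_cut_cap u tau a c + edge_cut_cap u tau a c.
Proof.
move=> a_gt0 c_gt0 ua uc.
case: (ltnP (a + tau) c) => hc.
  rewrite !edge_cut_cap_open; try lia.
  have -> : (c.+1 - tau = (c - tau).+1)%N by lia.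
  have -> : (c.-1 - tau = (c - tau).-1)%N by lia.
  have := psum_midpoint a_gt0 ua.
  have tau_lt : (tau < c)%N by lia.
  have c_tau_gt0 : (0 < c - tau)%N by lia.
  by have := psum_midpoint c_tau_gt0 (uc tau_lt); lra.
by rewrite !edge_cut_cap_closed ?addr0 //; lia.
Qed.

End EdgeCapacity.

Lemma cost_edge_sum (R : realDomainType) (V : finType) (E : rel V) tau T
    (u : V -> V -> nat -> R) (psi : V -> nat) :
  (forall i, (psi i <= T.+1)%N) ->
  cost E tau T u psi
  = \sum_(i : V) \sum_(j : V | E i j) edge_cut_cap (u i j) tau (psi i) (psi j).
Proof.
by move=> hb; apply: eq_bigr => i _; apply: eq_bigr => j _; apply: edge_cut_capE.
Qed.

Lemma min_cut_cost_le (R : realDomainType) (V : finType) (E : rel V) tau T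
    (u : V -> V -> nat -> R) (s d : V) (phi psi : V -> nat) :
  is_min_cut_fun E tau T u s d phi -> psi s = 0%N -> (T < psi d)%N ->
  cost E tau T u phi <= cost E tau T u psi.
Proof.
move=> [_ phi_min] psi_s psi_d; apply: phi_min; rewrite /cut_set ?psi_s -?ltnNge //.
by move=> i t _; apply: leqW.
Qed.

Section ShiftOfMinCut.
Variables (R : realDomainType) (V : finType) (E : rel V) (tau T : nat).
Variables (u : V -> V -> nat -> R) (s d : V) (phi : V -> nat) (C : {set V}).
Hypothesis phi_cut : is_cut_fun s d T phi.
Hypothesis C_notX : forall i, i \in C -> ~~ in_X T phi i.
Hypothesis C_allowed : forall i, i \in C -> ~ in_forbidden E tau T u phi C i (phi i).

Lemma C_phi_gt0 i : i \in C -> (0 < phi i)%N.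
Proof. by move/C_notX; rewrite /in_X negb_or lt0n => /andP[]. Qed.

Lemma C_phi_leT i : i \in C -> (phi i <= T)%N.
Proof.
case: phi_cut => _ _ phi_le.
by move/C_notX; rewrite /in_X negb_or => /andP[_]; have := phi_le i; lia.
Qed.

Lemma C_breaks_free i k l x : i \in C -> E k l -> (0 < x)%N ->
  (phi i = x \/ phi i = x + tau)%N -> u k l x = u k l x.-1.
Proof.
move=> iC Ekl x_gt0 phix; apply/eqP/negP => /negP ux.
by apply: (C_allowed iC); left; exists x; split => //; left; exists k, l.
Qed.

Lemma C_not_tight_out i j : i \in C -> E i j -> j \notin C -> (phi i + tau != phi j)%N.
Proof.
move=> iC Eij jC; apply/eqP => tight.
by apply: (C_allowed iC); right; left; exists j; split; [|split; [|left]].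
Qed.

Lemma C_not_tight_in i j : i \in C -> E j i -> j \notin C -> (phi j + tau != phi i)%N.
Proof.
move=> iC Eji jC; apply/eqP => tight.
by apply: (C_allowed iC); right; right; exists j; split; [|split; [|left]].
Qed.

Lemma phi_plus_le i : (phi_plus phi C i <= T.+1)%N.
Proof.
by rewrite /phi_plus; case: ifP => [/C_phi_leT|_] //; case: phi_cut.
Qed.

Lemma phi_minus_le i : (phi_minus phi C i <= T.+1)%N.
Proof.
case: phi_cut => _ _ phi_le.
by rewrite /phi_minus; case: ifP => _ //; apply: leq_trans (leq_pred _) _.
Qed.

Lemma cost_shift_midpoint :
  cost E tau T u (phi_plus phi C) + cost E tau T u (phi_minus phi C)
  = cost E tau T u phi + cost E tau T u phi.
Proof.
case: (phi_cut) => _ _ phi_le.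
rewrite !cost_edge_sum //; try exact: phi_plus_le; try exact: phi_minus_le.
rewrite -!big_split; apply: eq_bigr => i _; rewrite -!big_split; apply: eq_bigr => j Eij /=.
have flat_src : i \in C -> u i j (phi i) = u i j (phi i).-1.
  by move=> iC; apply: (C_breaks_free iC Eij (C_phi_gt0 iC)); left.
have flat_dst : j \in C -> (tau < phi j)%N -> u i j (phi j - tau) = u i j (phi j - tau).-1.
  move=> jC tau_lt; apply: (C_breaks_free jC Eij); first by rewrite subn_gt0.
  by right; rewrite subnK // ltnW.
rewrite /phi_plus /phi_minus; case iC: (i \in C); case jC: (j \in C) => //.
- by apply: edge_cut_cap_midpoint_both; rewrite ?C_phi_gt0 // ?flat_src // => /flat_dst->.
- apply: edge_cut_cap_midpoint_src; rewrite ?C_phi_gt0 ?flat_src //.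
  by apply: C_not_tight_out; rewrite ?jC.
- apply: edge_cut_cap_midpoint_dst; [exact: C_phi_gt0 | | exact: flat_dst].
  by apply: C_not_tight_in; rewrite ?iC.
Qed.

End ShiftOfMinCut.

Theorem mainTheorem3 (R : realDomainType) (V : finType) (E : rel V)
  (tau T : nat) (u : V -> V -> nat -> R) (s d : V) (phi : V -> nat)
  (C : {set V}) :
  (0 < tau)%N ->
  (forall i j t, 0 <= u i j t) ->
  is_min_cut_fun E tau T u s d phi ->
  (forall i, i \in C -> ~~ in_X T phi i) ->
  (forall i, i \in C -> ~ in_forbidden E tau T u phi C i (phi i)) ->
  cost E tau T u (phi_plus phi C) = cost E tau T u phi /\
  cost E tau T u (phi_minus phi C) = cost E tau T u phi.
Proof.
move=> _ _ phi_min C_notX C_allowed.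
have [[phi_s phi_d _] _] := phi_min.
have sC : s \notin C by apply/negP => /C_notX; rewrite /in_X phi_s.
have dC : d \notin C by apply/negP => /C_notX; rewrite /in_X phi_d eqxx orbT.
have le_plus : cost E tau T u phi <= cost E tau T u (phi_plus phi C).
  by apply: min_cut_cost_le phi_min _ _; rewrite /phi_plus ?(negbTE sC) ?(negbTE dC) ?phi_d.
have le_minus : cost E tau T u phi <= cost E tau T u (phi_minus phi C).
  by apply: min_cut_cost_le phi_min _ _; rewrite /phi_minus ?(negbTE sC) ?(negbTE dC) ?phi_d.
have := cost_shift_midpoint phi_min.1 C_notX C_allowed.
by split; lra.
Qed.
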